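(* For every pair of finite sets $W=\{w_1,\dots,w_n\}$, $F=\{f_1,\dots,f_m\}$ (with $n,m\ge 1$), every preference profile $\succcurlyeq$ and every ranking $\bm r$ of $W\cup F$, the matching matrix $\bm M_{\bm r}$ produced by serial dictatorship with ranking $\bm r$ on $\succcurlyeq$ satisfies $irv(\bm M_{\bm r},\succcurlyeq)\le 1/2$.
   Context: Let $\perp$ be the unmatched option; workers have linear-order preferences $\succcurlyeq_{w}$ on $F\cup\{\perp\}$, firms linear-order preferences $\succcurlyeq_f$ on $W\cup\{\perp\}$; $b\succ_a b'$ means $b\ne b'$ and $b\succcurlyeq_a b'$. A matching pairs agents one-to-one across the two sides, each agent being matched to one agent of the other side or unmatched. Its matching matrix $\bm M\in\{0,1\}^{(n+1)\times(m+1)}$ has, for $i\le n,j\le m$, $M_{ij}=1$ iff $w_i$ is matched to $f_j$, $M_{i,m+1}=1$ iff $w_i$ is unmatched, $M_{n+1,j}=1$ iff $f_j$ is unmatched, and $M_{n+1,m+1}=0$. Serial dictatorship with ranking $\bm r=(r_1,\dots,r_{n+m})$ (an ordering of $W\cup F$): for $k=1,\dots,n+m$, if $r_k$ is not yet matched, $r_k$ is assigned its most preferred option among $\perp$ and the not-yet-matched agents of the other side (and that agent, if any, becomes matched with $r_k$). For a profile $\succcurlyeq$ define, for $i\in[n],j\in[m]$, $p_{ij}=\frac1m\big(\mathbb I[f_j\succ_{w_i}\perp]+\sum_{j''=1}^m(\mathbb I[f_j\succ_{w_i}f_{j''}]-\mathbb I[\perp\succ_{w_i}f_{j''}])\big)$,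 $q_{ji}=\frac1n\big(\mathbb I[w_i\succ_{f_j}\perp]+\sum_{i''=1}^n(\mathbb I[w_i\succ_{f_j}w_{i''}]-\mathbb I[\perp\succ_{f_j}w_{i''}])\big)$, and the IR violation $irv(\bm M,\succcurlyeq)=\frac{1}{2n}\sum_{i=1}^n\sum_{j=1}^m M_{ij}\max\{-q_{ji},0\}+\frac{1}{2m}\sum_{i=1}^n\sum_{j=1}^m M_{ij}\max\{-p_{ij},0\}$. *)

From HB Require Import structures.
From mathcomp Require Import all_boot all_order all_algebra.
Set Implicit Arguments. Unset Strict Implicit. Unset Printing Implicit Defensive.
Import Order.TTheory GRing.Theory Num.Theory.
Local Open Scope ring_scope.

(* Workers are 'I_n, firms are 'I_m; the unmatched option ⊥ is None,
   so a worker's preference is a relation on option 'I_m ("b ≽ b'"). *)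

Definition linear_order (T : Type) (r : rel T) : Prop :=
  [/\ reflexive r, antisymmetric r, transitive r & total r].

Definition spref (T : eqType) (r : rel T) (b b' : T) : bool := (b != b') && r b b'.

Definition cand (T : Type) (avail : pred T) (x : option T) : bool :=
  if x is Some j then avail j else true.

Definition best (T : finType) (pref : rel (option T)) (avail : pred T) : option T :=
  odflt None [pick x : option T | cand avail x && [forall y : option T, cand avail y ==> pref x y]].

Definition agent (n m : nat) := ('I_n + 'I_m)%type.

(* state: for each worker / firm, None = not yet matched (processed),
   Some None = assigned ⊥, Some (Some a) = matched with a *)
Definition sd_state (n m : nat) :=
  (('I_n -> option (option 'I_m)) * ('I_m -> option (option 'I_n)))%type.

Definition sd_step (n m : nat) (prefW : 'I_n -> rel (option 'I_m))
    (prefF : 'I_m -> rel (option 'I_n)) (s : sd_state n m) (a : agent n m) : sd_state n m :=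
  let: (mW, mF) := s in
  match a with
  | inl i =>
      if mW i is None then
        let c := best (prefW i) (fun j => mF j == None) in
        ((fun i' => if i' == i then Some c else mW i'),
         (fun j => if c == Some j then Some (Some i) else mF j))
      else s
  | inr j =>
      if mF j is None then
        let c := best (prefF j) (fun i => mW i == None) in
        ((fun i => if c == Some i then Some (Some j) else mW i),
         (fun j' => if j' == j then Some c else mF j'))
      else s
  end.

Definition serial_dictatorship (n m : nat) (prefW : 'I_n -> rel (option 'I_m))
    (prefF : 'I_m -> rel (option 'I_n)) (r : seq (agent n m)) : sd_state n m :=
  foldl (sd_step prefW prefF) ((fun _ => None), (fun _ => None)) r.

(* matching matrix of size (n+1) x (m+1); index ord_max = the ⊥ row/column *)
Definition matching_matrix (R : nzRingType) (n m : nat) (s : sd_state n m) : 'M[R]_(n.+1, m.+1) :=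
  \matrix_(i < n.+1, j < m.+1)
    match unlift ord_max i, unlift ord_max j with
    | Some i', Some j' => (s.1 i' == Some (Some j'))%:R
    | Some i', None => (~~ [exists j' : 'I_m, s.1 i' == Some (Some j')])%:R
    | None, Some j' => (~~ [exists i' : 'I_n, s.2 j' == Some (Some i')])%:R
    | None, None => 0
    end.

Definition pW (R : numFieldType) (n m : nat) (prefW : 'I_n -> rel (option 'I_m))
    (i : 'I_n) (j : 'I_m) : R :=
  m%:R^-1 * ((spref (prefW i) (Some j) None)%:R
    + \sum_(j'' < m) ((spref (prefW i) (Some j) (Some j''))%:R
                      - (spref (prefW i) None (Some j''))%:R)).

Definition qF (R : numFieldType) (n m : nat) (prefF : 'I_m -> rel (option 'I_n))
    (j : 'I_m) (i : 'I_n) : R :=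
  n%:R^-1 * ((spref (prefF j) (Some i) None)%:R
    + \sum_(i'' < n) ((spref (prefF j) (Some i) (Some i''))%:R
                      - (spref (prefF j) None (Some i''))%:R)).

Definition irv (R : realFieldType) (n m : nat) (M : 'M[R]_(n.+1, m.+1))
    (prefW : 'I_n -> rel (option 'I_m)) (prefF : 'I_m -> rel (option 'I_n)) : R :=
  (2 * n%:R)^-1 * \sum_(i < n) \sum_(j < m)
      M (lift ord_max i) (lift ord_max j) * Num.max (- qF R prefF j i) 0
  + (2 * m%:R)^-1 * \sum_(i < n) \sum_(j < m)
      M (lift ord_max i) (lift ord_max j) * Num.max (- pW R prefW i j) 0.

From HB Require Import structures.
From mathcomp Require Import all_boot all_order all_algebra.
From mathcomp Require Import lra.
Set Implicit Arguments. Unset Strict Implicit. Unset Printing Implicit Defensive.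
Import Order.TTheory GRing.Theory Num.Theory.
Local Open Scope ring_scope.

(* In serial dictatorship the agent who picks a partner prefers it to staying
   unmatched, so every matched pair is individually rational for at least one
   side.  An agent who prefers its partner to ⊥ has a nonnegative score, since
   every option below ⊥ is then below the partner; and every score is at least
   -1.  Hence each matched pair adds at most max(1/2n, 1/2m) to irv, and there
   are at most min(n, m) matched pairs.  The argument works for any processing
   order. *)

Lemma spref_trans (T : eqType) (r : rel T) :
  antisymmetric r -> transitive r -> transitive (spref r).
Proof.
move=> r_anti r_trans y x z /andP[/eqP neq_xy r_xy] /andP[_ r_yz].
rewrite /spref (r_trans _ _ _ r_xy r_yz) andbT.
by apply/eqP=> eq_xz; subst z; apply: neq_xy; apply: r_anti; rewrite r_xy.
Qed.

Lemma best_Some (T : finType) (pref : rel (option T)) (avail : pred T) j :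
  best pref avail = Some j -> avail j && pref (Some j) None.
Proof.
rewrite /best; case: pickP => [x /andP[cand_x /forallP best_x]|_] //= eq_xj.
by subst x; rewrite /= in cand_x; rewrite cand_x (implyP (best_x None)).
Qed.

Section Scores.
Variables (R : realFieldType) (n m : nat) (prefW : 'I_n -> rel (option 'I_m)).

Lemma pW_ge0 i j : antisymmetric (prefW i) -> transitive (prefW i) ->
  spref (prefW i) (Some j) None -> 0 <= pW R prefW i j.
Proof.
move=> anti trans j_acc; rewrite /pW j_acc mulr_ge0 ?invr_ge0 ?ler0n //.
rewrite addr_ge0 // sumr_ge0 // => j'' _; rewrite subr_ge0 ler_nat.
by case: (boolP (spref _ None _)) => // /(spref_trans anti trans j_acc) ->.
Qed.

Lemma pW_ge_N1 i j : (0 < m)%N -> -1 <= pW R prefW i j.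
Proof.
move=> m_gt0; have -> : -1 = m%:R^-1 * - m%:R :> R.
  by rewrite mulrN mulVf // pnatr_eq0 -lt0n.
apply: ler_wpM2l; first by rewrite invr_ge0 ler0n.
have -> : - m%:R = \sum_(j'' < m) (-1 : R) by rewrite sumr_const card_ord mulNrn.
rewrite -[X in X <= _]add0r lerD ?ler0n //; apply: ler_sum => j'' _.
by case: spref; case: spref => /=; lra.
Qed.

End Scores.

Lemma qF_pW (R : realFieldType) n m (prefF : 'I_m -> rel (option 'I_n)) j i :
  qF R prefF j i = pW R prefF j i.
Proof. by []. Qed.

Section SerialDictatorship.
Variables (n m : nat) (prefW : 'I_n -> rel (option 'I_m)) (prefF : 'I_m -> rel (option 'I_n)).

Definition partners_agree (s : sd_state n m) : Prop :=
  forall i j, s.1 i = Some (Some j) -> s.2 j = Some (Some i).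

Definition pairs_acceptable (s : sd_state n m) : Prop :=
  forall i j, s.1 i = Some (Some j) ->
    spref (prefW i) (Some j) None || spref (prefF j) (Some i) None.

Lemma serial_dictatorship_ind (P : sd_state n m -> Prop) r :
  P (fun _ => None, fun _ => None) ->
  (forall s a, P s -> P (sd_step prefW prefF s a)) ->
  P (serial_dictatorship prefW prefF r).
Proof.
move=> P0 P_step; rewrite /serial_dictatorship.
by elim: r (_, _) P0 => [|a r IHr] s Ps //=; apply/IHr/P_step.
Qed.

Lemma sd_step_partners_agree s a :
  partners_agree s -> partners_agree (sd_step prefW prefF s a).
Proof.
case: s => mW mF agree; case: a => [i0|j0] /=.
- case: (mW i0) => [//|] i j /=.
  case: eqP => [-> [<-]|_ /agree]; first by rewrite eqxx.
  case: eqP => // /best_Some /andP[/eqP free_j _].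
  by rewrite /= free_j.
- case mF_j0: (mF j0) => [//|] i j /=.
  case: eqP => [c_i [<-]|_ /agree]; first by rewrite eqxx c_i.
  by case: eqP => // ->; rewrite /= mF_j0.
Qed.

Lemma sd_step_pairs_acceptable s a :
  pairs_acceptable s -> pairs_acceptable (sd_step prefW prefF s a).
Proof.
case: s => mW mF acceptable; case: a => [i0|j0] /=.
- case: (mW i0) => [//|] i j /=.
  case: eqP => [-> [/best_Some /andP[_ pref_j]]|_]; last exact: acceptable.
  by rewrite /spref pref_j.
- case: (mF j0) => [//|] i j /=.
  case: eqP => [/best_Some /andP[_ pref_i] [<-]|_]; last exact: acceptable.
  by rewrite /spref pref_i orbT.
Qed.

Lemma serial_dictatorship_partners_agree r :
  partners_agree (serial_dictatorship prefW prefF r).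
Proof. by apply: serial_dictatorship_ind => // s a; apply: sd_step_partners_agree. Qed.

Lemma serial_dictatorship_pairs_acceptable r :
  pairs_acceptable (serial_dictatorship prefW prefF r).
Proof. by apply: serial_dictatorship_ind => // s a; apply: sd_step_pairs_acceptable. Qed.

End SerialDictatorship.

Lemma sum_functional_rel_le (R : numDomainType) (I J : finType) (e : I -> J -> bool) :
  (forall i j j', e i j -> e i j' -> j = j') ->
  \sum_i \sum_j (e i j)%:R <= #|I|%:R :> R.
Proof.
move=> e_fun; rewrite -sum1_card natr_sum; apply: ler_sum => i _.
case: (pickP (e i)) => [j0 e_ij0 | no_j]; last by rewrite big1 // => j; rewrite no_j.
rewrite (bigD1 j0) //= e_ij0 big1 ?addr0 // => j /negbTE neq_j.
by case: (boolP (e i j)) => // /(e_fun _ _ _ e_ij0) eq_j; rewrite eq_j eqxx in neq_j.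
Qed.

Lemma weighted_penalty_le (R : realDomainType) (a b x y : R) :
  0 <= a -> 0 <= b -> -1 <= x -> -1 <= y -> (0 <= x) || (0 <= y) ->
  a * Num.max (- x) 0 + b * Num.max (- y) 0 <= Num.max a b.
Proof.
have penalty_le1 (z : R) : -1 <= z -> Num.max (- z) 0 <= 1.
  by move=> z_ge; rewrite ge_max ler01 andbT lerNl.
have penalty0 (z : R) : 0 <= z -> Num.max (- z) 0 = 0 by move=> z_ge0; rewrite max_r // oppr_le0.
move=> a_ge0 b_ge0 /penalty_le1 x_le1 /penalty_le1 y_le1.
case/orP=> [/penalty0 -> | /penalty0 ->]; rewrite mulr0 ?addr0 ?add0r le_max.
- by rewrite ler_piMr // orbT.
- by rewrite ler_piMr.
Qed.

Lemma matching_matrix_lift (R : nzRingType) n m (s : sd_state n m) i j :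
  matching_matrix R s (lift ord_max i) (lift ord_max j) = (s.1 i == Some (Some j))%:R.
Proof. by rewrite mxE !liftK. Qed.

Section OneSidedRationality.
Variables (R : realFieldType) (n m : nat).
Variables (prefW : 'I_n -> rel (option 'I_m)) (prefF : 'I_m -> rel (option 'I_n)).
Hypotheses (n_gt0 : (0 < n)%N) (m_gt0 : (0 < m)%N).
Hypotheses (hW : forall i, linear_order (prefW i)) (hF : forall j, linear_order (prefF j)).

Lemma acceptable_pair_penalty_le i j :
  spref (prefW i) (Some j) None || spref (prefF j) (Some i) None ->
  (2 * n%:R)^-1 * Num.max (- qF R prefF j i) 0 + (2 * m%:R)^-1 * Num.max (- pW R prefW i j) 0
    <= Num.max (2 * n%:R)^-1 (2 * m%:R)^-1.
Proof.
have [[_ antiW transW _] [_ antiF transF _]] := (hW i, hF j).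
have inv_ge0 (k : nat) : 0 <= (2 * k%:R)^-1 :> R by rewrite invr_ge0 mulr_ge0 ?ler0n.
move=> acceptable; rewrite qF_pW.
apply: weighted_penalty_le; [exact: inv_ge0 | exact: inv_ge0 | exact: pW_ge_N1 | exact: pW_ge_N1 |].
apply/orP; case/orP: acceptable => [/(pW_ge0 R antiW transW) | /(pW_ge0 R antiF transF)].
- by right.
- by left.
Qed.

Lemma irv_le_half (s : sd_state n m) :
  partners_agree s -> pairs_acceptable prefW prefF s ->
  irv (matching_matrix R s) prefW prefF <= 1 / 2.
Proof.
move=> agree acceptable.
pose e i j := s.1 i == Some (Some j).
pose a : R := (2 * n%:R)^-1; pose b : R := (2 * m%:R)^-1.
have -> : irv (matching_matrix R s) prefW prefF = \sum_i \sum_j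
    (e i j)%:R * (a * Num.max (- qF R prefF j i) 0 + b * Num.max (- pW R prefW i j) 0).
  rewrite /irv !mulr_sumr -big_split; apply: eq_bigr => i _.
  rewrite !mulr_sumr -big_split; apply: eq_bigr => j _.
  by rewrite matching_matrix_lift mulrDr (mulrCA (2 * n%:R)^-1) (mulrCA (2 * m%:R)^-1).
have pair_le i j : (e i j)%:R * (a * Num.max (- qF R prefF j i) 0
    + b * Num.max (- pW R prefW i j) 0) <= (e i j)%:R * Num.max a b.
  rewrite /e; case: eqP => [/acceptable /acceptable_pair_penalty_le | _]; last by rewrite !mul0r.
  by rewrite !mul1r.
apply: le_trans (ler_sum _ (fun i _ => ler_sum _ (fun j _ => pair_le i j))) _.
under eq_bigr do rewrite -mulr_suml; rewrite -mulr_suml.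
have pairs_le_n : \sum_i \sum_j (e i j)%:R <= n%:R :> R.
  rewrite -[n in n%:R]card_ord; apply: sum_functional_rel_le => i j j'.
  by rewrite /e => /eqP -> /eqP [].
have pairs_le_m : \sum_i \sum_j (e i j)%:R <= m%:R :> R.
  rewrite exchange_big -[m in m%:R]card_ord; apply: sum_functional_rel_le => j i i'.
  by rewrite /e => /eqP /agree partner_j /eqP /agree; rewrite partner_j => -[].
have half k : (0 < k)%N -> k%:R * (2 * k%:R)^-1 = 1 / 2 :> R.
  by move=> k_gt0; rewrite invfM mulrCA mulfV ?mulr1 ?div1r // pnatr_eq0 -lt0n.
case: (leP a b) => _.
- by rewrite -(half m) //; apply: ler_wpM2r; rewrite ?invr_ge0 ?mulr_ge0 ?ler0n.
- by rewrite -(half n) //; apply: ler_wpM2r; rewrite ?invr_ge0 ?mulr_ge0 ?ler0n.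
Qed.

End OneSidedRationality.

Theorem proposition2 (R : realFieldType) (n m : nat) (hn : (1 <= n)%N) (hm : (1 <= m)%N)
    (prefW : 'I_n -> rel (option 'I_m)) (prefF : 'I_m -> rel (option 'I_n))
    (hW : forall i, linear_order (prefW i)) (hF : forall j, linear_order (prefF j))
    (r : seq (agent n m)) (hr_uniq : uniq r) (hr_all : forall a : agent n m, a \in r) :
  irv (matching_matrix R (serial_dictatorship prefW prefF r)) prefW prefF <= 1 / 2.
Proof.
apply: irv_le_half => //.
- exact: serial_dictatorship_partners_agree.
- exact: serial_dictatorship_pairs_acceptable.
Qed.
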